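(* Consider $N$ independent channels, each a two-state Markov chain with common transition matrix $\mathbf{P}$, and let $i\in\{1,2\}$. There is a constant $C_i(\mathbf{P})$, depending only on $\mathbf{P}$ and the policy $\pi_i$, such that for any initial belief vector $\Omega(1)$ and any positive integer $M$, $$\Big|\mathbb{E}^{\pi_i}\Big[\sum_{t=1}^{M}Y^{\pi_i}(\mathbf{P},\Omega(1),t)\Big]-M\cdot U_i(\mathbf{P})\Big|<C_i(\mathbf{P}).$$
   Context: Time is slotted. The state $S_k(t)\in\{0,1\}$ of channel $k$ evolves as a two-state Markov chain with transition matrix $\mathbf{P}=(p_{xy})$, $p_{xy}=\Pr(S_k(t+1)=y\mid S_k(t)=x)$, independently across channels. In each slot a user senses one channel, observes its state, and receives reward equal to that state. $\Omega(1)=[\omega_1(1),\dots,\omega_N(1)]$ is the initial belief vector, $\omega_k(1)=\Pr(S_k(1)=1)$. $Y^{\pi}(\mathbf{P},\Omega(1),t)$ denotes the reward at time $t$ under policy $\pi$. Policies: a circular order $\kappa=(n_1,\dots,n_N)$ is identified with its cyclic shifts; $-\kappa$ is the reversed order and $k^+_\kappa$ the channel following $k$ in $\kappa$. Let $\kappa(1)=(n_1,\dots,n_N)$ with $\omega_{n_1}(1)\le\cdots\le\omega_{n_N}(1)$ and $\hat a(1)=\arg\max_k\omega_k(1)$. Policy $\pi_1$: for $t>1$, $\hat a(t)=\hat a(t-1)$ if $S_{\hat a(t-1)}(t-1)=1$, else $\hat a(t)=\hat a(t-1)^+_{\kappa(1)}$. Policy $\pi_2$: for $t>1$, $\hat a(t)=\hat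 a(t-1)$ if $S_{\hat a(t-1)}(t-1)=0$, else $\hat a(t)=\hat a(t-1)^+_{\kappa(t)}$, where $\kappa(t)=\kappa(1)$ for odd $t$ and $\kappa(t)=-\kappa(1)$ for even $t$. $U_i(\mathbf{P})=\lim_{T\to\infty}\frac1T\mathbb{E}^{\pi_i}\big[\sum_{t=1}^T Y^{\pi_i}(\mathbf{P},\Omega(1),t)\big]$ is the steady-state average expected reward of $\pi_i$; this limit exists and does not depend on $\Omega(1)$. *)

From HB Require Import structures.
From mathcomp Require Import all_boot all_order all_fingroup all_algebra.
From mathcomp Require Import all_classical all_reals all_analysis.
Set Implicit Arguments. Unset Strict Implicit. Unset Printing Implicit Defensive.
Import Order.TTheory GRing.Theory Num.Theory.
Local Open Scope ring_scope.

(* Channel states: true = state 1, false = state 0.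
   A transition matrix P : bool -> bool -> R, P x y = p_{xy}. *)
Definition stochastic (R : realType) (P : bool -> bool -> R) : Prop :=
  (forall x y, 0 <= P x y) /\ (forall x, P x false + P x true = 1).

(* A circular order kappa = (n_1,...,n_N) on the channels 'I_N is represented
   by a permutation s : position -> channel (s j = n_{j+1}).
   k^+_kappa is the next channel in kappa; the next channel in -kappa is the
   previous channel in kappa. *)
Definition succ_in (N : nat) (s : {perm 'I_N}) (k : 'I_N) : 'I_N :=
  s (ordS ((s^-1)%g k)).
Definition pred_in (N : nat) (s : {perm 'I_N}) (k : 'I_N) : 'I_N :=
  s (ord_pred ((s^-1)%g k)).

Inductive policy := Pi1 | Pi2.

(* Channel sensed at slot u+1 (u = 0,1,... is 0-indexed time), given the
   realized channel states x : nat -> 'I_N -> bool (x u k = S_k(u+1)),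
   the order kappa(1) (= s) and the initial channel a1. *)
Fixpoint sensed (N : nat) (pol : policy) (s : {perm 'I_N}) (a1 : 'I_N)
    (x : nat -> 'I_N -> bool) (u : nat) : 'I_N :=
  match u with
  | 0 => a1
  | u'.+1 =>
    let a := sensed pol s a1 x u' in
    match pol with
    | Pi1 => if x u' a then a else succ_in s a
    | Pi2 => if x u' a
             then (if odd u then pred_in s a   (* paper time u+1 even: -kappa(1) *)
                   else succ_in s a)           (* paper time u+1 odd: kappa(1) *)
             else a
    end
  end.

Definition ext_traj (M N : nat) (x : {ffun 'I_M -> {ffun 'I_N -> bool}})
  : nat -> 'I_N -> bool :=
  fun u k => if (insub u : option 'I_M) is Some i then x i k else false.

Definition init_prob (R : realType) (w : R) (b : bool) : R :=
  if b then w else 1 - w.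

(* Probability of a trajectory: independent channels, each a Markov chain
   with initial law Bernoulli(omega_k(1)) and transition matrix P. *)
Definition traj_prob (R : realType) (N M : nat) (P : bool -> bool -> R)
    (Om : 'I_N -> R) (x : {ffun 'I_M -> {ffun 'I_N -> bool}}) : R :=
  \prod_(k < N) (init_prob (Om k) (ext_traj x 0 k) *
     \prod_(u < M.-1) P (ext_traj x u k) (ext_traj x u.+1 k)).

Definition traj_reward (R : realType) (N M : nat) (pol : policy)
    (s : {perm 'I_N}) (a1 : 'I_N) (x : {ffun 'I_M -> {ffun 'I_N -> bool}}) : R :=
  \sum_(u < M) ((ext_traj x u (sensed pol s a1 (ext_traj x) u) : nat)%:R).

Definition expected_reward (R : realType) (N : nat) (pol : policy)
    (P : bool -> bool -> R) (Om : 'I_N -> R) (s : {perm 'I_N}) (a1 : 'I_N)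
    (M : nat) : R :=
  \sum_(x : {ffun 'I_M -> {ffun 'I_N -> bool}})
     traj_prob P Om x * traj_reward R pol s a1 x.

(* Omega(1) is a belief vector, s encodes kappa(1) (channels sorted by
   nondecreasing belief, ties broken arbitrarily), a1 = argmax belief. *)
Definition admissible_init (R : realType) (N : nat) (Om : 'I_N -> R)
    (s : {perm 'I_N}) (a1 : 'I_N) : Prop :=
  [/\ forall k, 0 <= Om k <= 1,
      forall i j : 'I_N, (i <= j)%N -> Om (s i) <= Om (s j)
    & forall k, Om k <= Om a1].

From Pilot Require Import Defs.
From HB Require Import structures.
From mathcomp Require Import all_boot all_order all_fingroup all_algebra.
From mathcomp Require Import all_classical all_reals all_analysis.
From mathcomp Require Import ring.
Set Implicit Arguments. Unset Strict Implicit. Unset Printing Implicit Defensive.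
Import Order.TTheory GRing.Theory Num.Theory.
Import numFieldTopology.Exports numFieldNormedType.Exports.
Local Open Scope classical_set_scope.
Local Open Scope ring_scope.

(* The triple (channel states, sensed channel, parity of time) is a finite
   Markov chain, so the expected reward in slot t is e t = w A^t r for a
   kernel matrix A, a reward vector r and a row vector w of initial law, with
   0 <= e t <= 1.  Write char_poly A = (X - 1)^m h with h(1) <> 0.  A bounded
   sequence with vanishing second difference is constant, so boundedness
   forces (X - 1) h to annihilate e, i.e. h(S) e is a constant c0 (S is the
   shift).  As h = h(1) + (X - 1) a, the partial sum of e up to M equals
   M c0 / h(1) up to a telescoping term a(S) e evaluated at 0 and M, which is
   bounded in terms of a and A only, uniformly in w.  The slope c0 / h(1)
   must be the limit U of the averages, and there are finitely many orders
   kappa(1). *)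

Lemma bounded_second_diff0_const (R : archiRealFieldType) (f : nat -> R) (B : R) :
  (forall t, `|f t| <= B) -> (forall t, f t.+2 - f t.+1 = f t.+1 - f t) ->
  forall t, f t.+1 = f t.
Proof.
move=> fB f2.
set d := f 1%N - f 0%N.
have fdiff t : f t.+1 - f t = d by elim: t => // t IH; rewrite f2.
have f_affine t : f t = f 0%N + t%:R * d.
  elim: t => [|t IH]; first by rewrite mul0r addr0.
  by rewrite -natr1 mulrDl mul1r addrA -IH -(fdiff t) addrC subrK.
suff d0 : d = 0 by move=> t; apply/eqP; rewrite -subr_eq0 fdiff d0.
apply/eqP; apply: contraT => dn0.
have d_gt0 : 0 < `|d| by rewrite normr_gt0.
have tdB t : t%:R * `|d| <= B + B.
  have := ler_normB (f t) (f 0%N); rewrite f_affine addrC addKr normrM normr_nat.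
  by move/le_trans; apply; rewrite -f_affine; apply: lerD.
have B2d_ge0 : 0 <= (B + B) / `|d|.
  by apply: divr_ge0 (ltW d_gt0); apply: le_trans (tdB 0%N); rewrite mul0r.
have := archi_boundP B2d_ge0; rewrite ltr_pdivrMr // => /lt_le_trans /(_ (tdB _)).
by rewrite ltxx.
Qed.

Section ShiftedOrbit.
Variables (R : realType) (n : nat) (A : 'M[R]_n.+1) (r : 'cV[R]_n.+1).

(* [pshift w p] is [p(S) e] for the sequence [e t = w A^t r] and the shift
   operator [S]; by Cayley-Hamilton, [char_poly A] annihilates [e]. *)
Definition pshift (w : 'rV[R]_n.+1) (p : {poly R}) (t : nat) : R :=
  (w *m A ^+ t *m horner_mx A p *m r) 0 0.

Variable w : 'rV[R]_n.+1.

Lemma pshift0 t : pshift w 0 t = 0.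
Proof. by rewrite /pshift rmorph0 mulmx0 mul0mx mxE. Qed.

Lemma pshiftD p q t : pshift w (p + q) t = pshift w p t + pshift w q t.
Proof. by rewrite /pshift rmorphD /= mulmxDr mulmxDl mxE. Qed.

Lemma pshiftB p q t : pshift w (p - q) t = pshift w p t - pshift w q t.
Proof.
have pshiftN u : pshift w (- u) t = - pshift w u t.
  by rewrite /pshift rmorphN /= mulmxN mulNmx mxE.
by rewrite pshiftD pshiftN.
Qed.

Lemma pshiftCM c p t : pshift w (c%:P * p) t = c * pshift w p t.
Proof.
rewrite /pshift rmorphM /= horner_mx_C -mulmxE mulmxA mul_mx_scalar.
by rewrite -!scalemxAl mxE.
Qed.

Lemma pshiftXM p t : pshift w ('X * p) t = pshift w p t.+1.
Proof. by rewrite /pshift rmorphM /= horner_mx_X exprSr -!mulmxE !mulmxA. Qed.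

Lemma pshift_diff q t : pshift w (('X - 1) * q) t = pshift w q t.+1 - pshift w q t.
Proof. by rewrite mulrBl mul1r pshiftB pshiftXM. Qed.

Lemma pshift_char_poly t : pshift w (char_poly A) t = 0.
Proof. by rewrite /pshift Cayley_Hamilton mulmx0 mul0mx mxE. Qed.

End ShiftedOrbit.

Section BoundedOrbit.
Variables (R : realType) (n : nat) (A : 'M[R]_n.+1) (r : 'cV[R]_n.+1).
Local Notation pshift := (@pshift R n A r).
Local Notation bounded_orbit w := (forall t, `|pshift w 1 t| <= 1).

Lemma pshift_bounded p :
  exists B : R, forall w, bounded_orbit w -> forall t, `|pshift w p t| <= B.
Proof.
elim/poly_ind: p => [|p c [B pB]].
  by exists 0 => w _ t; rewrite pshift0 normr0.
exists (B + `|c|) => w wB t.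
rewrite pshiftD mulrC pshiftXM -[c%:P]mulr1 pshiftCM.
apply: le_trans (ler_normD _ _) _; apply: lerD; first exact: pB.
by rewrite normrM -{2}[`|c|]mulr1 ler_wpM2l.
Qed.

Lemma bounded_orbit_XsubC1_root w k q : bounded_orbit w ->
  (forall t, pshift w (('X - 1) ^+ k.+1 * q) t = 0) ->
  forall t, pshift w (('X - 1) * q) t = 0.
Proof.
move=> wB; elim: k q => [|k IH] q; first by rewrite expr1.
rewrite exprSr -mulrA => /IH qk t.
have [B qB] := pshift_bounded q.
rewrite pshift_diff; apply/eqP; rewrite subr_eq0; apply/eqP.
apply: bounded_second_diff0_const (qB w wB) _ t => {}t.
by have /eqP := qk t; rewrite !pshift_diff subr_eq0 => /eqP.
Qed.

Lemma bounded_orbit_sum_affine : exists K : R, 0 <= K /\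
  forall w, bounded_orbit w ->
  exists c : R, forall M, `|\sum_(t < M) pshift w 1 t - M%:R * c| <= K.
Proof.
have [m [h h1_root chiE]] := multiplicity_XsubC (char_poly A) 1.
rewrite monic_neq0 ?char_poly_monic //= in h1_root.
set h1 := h.[1] in h1_root *.
have h1_neq0 : h1 != 0 by [].
have /factor_theorem [a hE] : root (h - h1%:P) 1.
  by rewrite /root hornerD hornerN hornerC subrr.
have [Ba aB] := pshift_bounded a.
exists ((`|Ba| + `|Ba|) / `|h1|); split.
  by apply: divr_ge0; rewrite ?addr_ge0.
move=> w wB.
have hX_root t : pshift w (('X - 1) * h) t = 0.
  apply: (@bounded_orbit_XsubC1_root w m) => // {}t.
  have -> : ('X - 1) ^+ m.+1 * h = ('X - 1) * char_poly A.
    by rewrite chiE polyC1 exprS mulrA mulrAC.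
  by rewrite pshift_diff !pshift_char_poly subrr.
have h_const t : pshift w h t = pshift w h 0.
  by elim: t => // t <-; apply/eqP; rewrite -subr_eq0 -pshift_diff hX_root.
have h1e t : h1 * pshift w 1 t = pshift w h 0 - (pshift w a t.+1 - pshift w a t).
  rewrite -pshiftCM (_ : h1%:P * 1 = h - ('X - 1) * a); last first.
    by rewrite mulr1 -polyC1 [_ * a]mulrC -hE; ring.
  by rewrite pshiftB h_const pshift_diff.
exists (pshift w h 0 / h1) => M.
have sumE : \sum_(t < M) pshift w 1 t
    = (M%:R * pshift w h 0 - (pshift w a M - pshift w a 0)) / h1.
  apply: (mulfI h1_neq0); rewrite mulrCA mulfV // mulr1.
  rewrite mulr_sumr; under eq_bigr do rewrite h1e.
  rewrite sumrB sumr_const card_ord mulr_natl.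
  rewrite -(big_mkord xpredT (fun t => pshift w a t.+1 - pshift w a t)).
  by rewrite telescope_sumr.
have -> : \sum_(t < M) pshift w 1 t - M%:R * (pshift w h 0 / h1)
    = (pshift w a 0 - pshift w a M) / h1.
  by rewrite sumE; field.
rewrite normrM normfV ler_wpM2r ?invr_ge0 //.
apply: le_trans (ler_normB _ _) _.
by apply: lerD; apply: le_trans (aB w wB _) _; exact: ler_norm.
Qed.
End BoundedOrbit.

Lemma mx_orbit_sum_affine (R : realType) (n : nat) (A : 'M[R]_n) (r : 'cV[R]_n) :
  exists K : R, 0 <= K /\ forall w : nat -> 'rV[R]_n,
    (forall t, w t.+1 = w t *m A) -> (forall t, `|(w t *m r) 0 0| <= 1) ->
    exists c : R, forall M, `|\sum_(t < M) (w t *m r) 0 0 - M%:R * c| <= K.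
Proof.
case: n A r => [|n] A r.
  exists 0; split => // w _ _; exists 0 => M.
  by rewrite big1 ?mulr0 ?subr0 ?normr0 // => t _; rewrite mxE big_ord0.
have [K [K_ge0 KP]] := bounded_orbit_sum_affine A r.
exists K; split => // w wS wB.
have wE t : (w t *m r) 0 0 = pshift A r (w 0%N) 1 t.
  rewrite /pshift rmorph1 mulmx1; congr ((_ *m r) 0 0).
  by elim: t => [|t IH]; rewrite ?expr0 ?mulmx1 // wS IH exprSr mulmxA.
have [|c cP] := KP (w 0%N); first by move=> t; rewrite -wE.
by exists c => M; under eq_bigr do rewrite wE.
Qed.

Section FfunRcons.
Variable T : finType.

Definition ffun_rcons M (y : {ffun 'I_M -> T}) (b : T) : {ffun 'I_M.+1 -> T} :=
  [ffun i => if unlift ord_max i is Some j then y j else b].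

Lemma big_ffun_rcons (R : Type) (idx : R) (op : Monoid.com_law idx) M
    (F : {ffun 'I_M.+1 -> T} -> R) :
  \big[op/idx]_(x : {ffun 'I_M.+1 -> T}) F x =
  \big[op/idx]_(y : {ffun 'I_M -> T}) \big[op/idx]_(b : T) F (ffun_rcons y b).
Proof.
rewrite pair_bigA (reindex (fun p : {ffun 'I_M -> T} * T => ffun_rcons p.1 p.2)) //.
apply: onW_bij.
exists (fun x : {ffun 'I_M.+1 -> T} => ([ffun j => x (lift ord_max j)], x ord_max)).
  case=> y b /=; congr pair; last by rewrite ffunE unlift_none.
  by apply/ffunP => j; rewrite !ffunE liftK.
move=> x /=; apply/ffunP => i; rewrite ffunE.
by case: unliftP => [j ->|->]; rewrite ?ffunE.
Qed.
End FfunRcons.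

Section Trajectories.
Variable N : nat.
Local Notation states := {ffun 'I_N -> bool}.

Lemma ext_traj_ord M (x : {ffun 'I_M -> states}) (i : 'I_M) k :
  ext_traj x i k = x i k.
Proof. by rewrite /ext_traj valK. Qed.

Lemma ext_traj_rcons M (y : {ffun 'I_M -> states}) b u k : (u < M)%N ->
  ext_traj (ffun_rcons y b) u k = ext_traj y u k.
Proof.
move=> lt_uM; pose j := Ordinal lt_uM.
have {1}-> : u = lift ord_max j by rewrite /= /bump leqNgt lt_uM.
by rewrite ext_traj_ord ffunE liftK -[u]/(val j) ext_traj_ord.
Qed.

Lemma ext_traj_rcons_last M (y : {ffun 'I_M -> states}) b k :
  ext_traj (ffun_rcons y b) M k = b k.
Proof. by rewrite -[M]/(val (@ord_max M)) ext_traj_ord ffunE unlift_none. Qed.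

Lemma sensed_eq_past pol (s : {perm 'I_N}) a1 (x1 x2 : nat -> 'I_N -> bool) u :
  (forall v k, (v < u)%N -> x1 v k = x2 v k) ->
  sensed pol s a1 x1 u = sensed pol s a1 x2 u.
Proof.
elim: u => [|u IH] x12 //=.
by rewrite IH ?x12 // => v k /ltnW; apply: x12.
Qed.
End Trajectories.

Lemma sum_mul_by_value (R : nzRingType) (X Z : finType) (f : X -> R) (g : X -> Z)
    (G : Z -> R) :
  \sum_(x : X) f x * G (g x) = \sum_(z : Z) (\sum_(x : X) f x * (g x == z)%:R) * G z.
Proof.
under [RHS]eq_bigr do rewrite big_distrl.
rewrite exchange_big; apply: eq_bigr => x _.
rewrite (bigD1 (g x)) //= eqxx mulr1 big1 ?addr0 // => z.
by rewrite eq_sym => /negbTE ->; rewrite mulr0 mul0r.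
Qed.

Section SensingChain.
Variables (R : realType) (N : nat) (P : bool -> bool -> R) (pol : policy)
  (s : {perm 'I_N}) (Om : 'I_N -> R) (a1 : 'I_N).
Hypothesis P_stoch : stochastic P.
Hypothesis Om01 : forall k, 0 <= Om k <= 1.
Local Notation states := {ffun 'I_N -> bool}.
Local Notation traj_prob := (traj_prob P Om).

(* The sensed channel only depends on the previous one, on the states just
   observed and on the parity of time, so the triple (channel states, sensed
   channel, parity of time) is a finite Markov chain, with kernel [kernel]. *)
Local Notation state := (states * 'I_N * bool)%type.

Definition chain_state M (x : {ffun 'I_M -> states}) (u : nat) : state :=
  ([ffun k => ext_traj x u k], sensed pol s a1 (ext_traj x) u, odd u).

Definition next_channel (z : state) : 'I_N :=
  let: (c, a, p) := z in
  match pol with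
  | Pi1 => if c a then a else succ_in s a
  | Pi2 => if c a then (if ~~ p then pred_in s a else succ_in s a) else a
  end.

Definition kernel (z z' : state) : R :=
  ((z'.1.2 == next_channel z) && (z'.2 == ~~ z.2))%:R *
  \prod_k P (z.1.1 k) (z'.1.1 k).

Definition reward (z : state) : R := (z.1.1 z.1.2 : nat)%:R.

Definition state_law (u : nat) (z : state) : R :=
  \sum_(x : {ffun 'I_u.+1 -> states}) traj_prob x * (chain_state x u == z)%:R.

Lemma chain_state_succ M (x : {ffun 'I_M -> states}) u :
  chain_state x u.+1 =
  ([ffun k => ext_traj x u.+1 k], next_channel (chain_state x u), ~~ odd u).
Proof. by rewrite /chain_state /next_channel /=; case: pol; rewrite ffunE. Qed.

Lemma chain_state_rcons M (y : {ffun 'I_M -> states}) b u : (u < M)%N ->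
  chain_state (ffun_rcons y b) u = chain_state y u.
Proof.
move=> lt_uM; rewrite /chain_state; congr (_, _, _).
  by apply/ffunP => k; rewrite !ffunE ext_traj_rcons.
apply: sensed_eq_past => v k lt_vu; apply: ext_traj_rcons; exact: ltn_trans lt_uM.
Qed.

Lemma traj_prob_rcons M (y : {ffun 'I_M.+1 -> states}) b :
  traj_prob (ffun_rcons y b) = traj_prob y * \prod_k P (ext_traj y M k) (b k).
Proof.
rewrite /Defs.traj_prob -big_split; apply: eq_bigr => k _ /=.
rewrite big_ord_recr /= mulrA ext_traj_rcons_last !(@ext_traj_rcons _ M.+1) //.
congr (_ * _ * _); apply: eq_bigr => u _.
by rewrite !ext_traj_rcons // ltnS // ltnW.
Qed.

Lemma sum_transition (c : 'I_N -> bool) : \sum_(b : states) \prod_k P (c k) (b k) = 1.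
Proof.
rewrite -(bigA_distr_bigA (fun k (j : bool) => P (c k) j)) /=; apply: big1 => k _.
by rewrite big_bool /= addrC; case: P_stoch => _ ->.
Qed.

Lemma traj_prob_ge0 M (x : {ffun 'I_M -> states}) : 0 <= traj_prob x.
Proof.
apply: prodr_ge0 => k _; apply: mulr_ge0; last by apply: prodr_ge0; case: P_stoch.
by have /andP[? ?] := Om01 k; rewrite /init_prob; case: ifP; rewrite ?subr_ge0.
Qed.

Lemma traj_prob_sum1 M : \sum_(x : {ffun 'I_M.+1 -> states}) traj_prob x = 1.
Proof.
elim: M => [|M IH]; rewrite big_ffun_rcons; last first.
  rewrite -[RHS]IH; apply: eq_bigr => y _.
  under eq_bigr do rewrite traj_prob_rcons.
  by rewrite -big_distrr /= sum_transition mulr1.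
rewrite (eq_bigr (fun=> 1)) ?sumr_const ?card_ffun ?card_ord ?expn0 // => y _.
have initE b : traj_prob (ffun_rcons y b) = \prod_k init_prob (Om k) (b k).
  by apply: eq_bigr => k _; rewrite big_ord0 mulr1 ext_traj_rcons_last.
under eq_bigr do rewrite initE.
rewrite -(bigA_distr_bigA (fun k (j : bool) => init_prob (Om k) j)) /=.
by apply: big1 => k _; rewrite big_bool /= /init_prob subrKC.
Qed.

Lemma traj_prob_marginal u M (G : state -> R) : (u < M)%N ->
  \sum_(x : {ffun 'I_M -> states}) traj_prob x * G (chain_state x u) =
  \sum_(x : {ffun 'I_u.+1 -> states}) traj_prob x * G (chain_state x u).
Proof.
elim: M => // M IH; rewrite ltnS leq_eqVlt => /orP [/eqP -> //|lt_uM].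
case: M IH lt_uM => // M IH lt_uM.
rewrite big_ffun_rcons -IH //; apply: eq_bigr => y _.
under eq_bigr do rewrite traj_prob_rcons chain_state_rcons // mulrAC.
by rewrite -big_distrr /= sum_transition mulr1.
Qed.

Lemma sum_kernel (z z' : state) :
  \sum_(b : states) (\prod_k P (z.1.1 k) (b k)) *
    ((b, next_channel z, ~~ z.2) == z')%:R = kernel z z'.
Proof.
case: z' => [[c' a'] p']; rewrite /kernel /=.
rewrite (bigD1 c') //= [X in _ + X]big1 ?addr0; last first.
  by move=> b /negbTE bc; rewrite !xpair_eqE bc mulr0.
by rewrite !xpair_eqE eqxx /= mulrC [next_channel z == a']eq_sym [~~ z.2 == p']eq_sym.
Qed.

Lemma state_law_succ u z' : state_law u.+1 z' = \sum_z state_law u z * kernel z z'.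
Proof.
rewrite /state_law.
rewrite -(sum_mul_by_value traj_prob (fun x => chain_state x u) (fun z => kernel z z')).
rewrite big_ffun_rcons; apply: eq_bigr => y _.
under eq_bigr do rewrite traj_prob_rcons chain_state_succ chain_state_rcons //.
have lastE b : [ffun k => ext_traj (ffun_rcons y b) u.+1 k] = b.
  by apply/ffunP => k; rewrite ffunE ext_traj_rcons_last.
under eq_bigr do rewrite lastE.
rewrite -sum_kernel mulr_sumr; apply: eq_bigr => b _.
rewrite mulrA; congr (_ * _ * _).
by apply: eq_bigr => k _; rewrite /chain_state /= ffunE.
Qed.

Lemma state_law_ge0 u z : 0 <= state_law u z.
Proof. by apply: sumr_ge0 => x _; rewrite mulr_ge0 ?traj_prob_ge0. Qed.

Lemma state_law_sum1 u : \sum_z state_law u z = 1.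
Proof.
have /= := sum_mul_by_value traj_prob
  (fun x : {ffun 'I_u.+1 -> states} => chain_state x u) (fun=> 1 : R).
by rewrite !(eq_bigr _ (fun _ _ => mulr1 _)) traj_prob_sum1 => <-.
Qed.

Lemma expected_step_reward_le1 u : `|\sum_z state_law u z * reward z| <= 1.
Proof.
have reward01 z : 0 <= reward z <= 1.
  by rewrite /reward; case: (z.1.1 _); rewrite ?lexx ?ler01.
rewrite ger0_norm; last first.
  apply: sumr_ge0 => z _.
  by have /andP[? _] := reward01 z; rewrite mulr_ge0 ?state_law_ge0.
rewrite -(state_law_sum1 u); apply: ler_sum => z _.
by have /andP[_ ?] := reward01 z; rewrite -[leRHS]mulr1 ler_wpM2l ?state_law_ge0.
Qed.

Lemma expected_reward_state_law M :
  expected_reward pol P Om s a1 M = \sum_(u < M) \sum_z state_law u z * reward z.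
Proof.
rewrite /expected_reward; under eq_bigr do rewrite /traj_reward big_distrr.
rewrite exchange_big; apply: eq_bigr => u _.
rewrite (eq_bigr (fun x => traj_prob x * reward (chain_state x u))); last first.
  by move=> x _; rewrite /reward /chain_state /= ffunE.
by rewrite traj_prob_marginal // sum_mul_by_value.
Qed.
End SensingChain.

Lemma affine_bounded_avg_cvg (R : realType) (g : nat -> R) (K c : R) :
  (forall M, `|g M - M%:R * c| <= K) -> (fun T => g T / T%:R) @ \oo --> c.
Proof.
move=> gK.
have inv_cvg0 : (fun T : nat => (T%:R : R)^-1) @ \oo --> 0.
  by apply/gtr0_cvgV0; [near=> T; rewrite ltr0n; near: T; exists 1%N | exact: cvgr_idn].
have cvg_c e : (fun T : nat => c + e * (T%:R : R)^-1) @ \oo --> c.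
  rewrite -[c in _ --> c]addr0 -(mulr0 e).
  by apply: cvgD; [exact: cvg_cst | apply: cvgM => //; exact: cvg_cst].
apply: (squeeze_cvgr _ (cvg_c (- K)) (cvg_c K)).
near=> T.
have T_gt0 : (0 : R) < T%:R by rewrite ltr0n; near: T; exists 1%N.
have avgE : g T / T%:R = c + (g T - T%:R * c) / T%:R.
  by rewrite mulrBl mulrAC mulfV ?gt_eqF // mul1r addrC subrK.
rewrite avgE !lerD2l mulNr -ler_norml normrM normfV normr_nat.
by rewrite ler_wpM2r ?invr_ge0 ?ler0n.
Unshelve. all: end_near.
Qed.

Section StateLawMatrix.
Variables (R : realType) (N : nat) (P : bool -> bool -> R) (pol : policy).
Local Notation state := ({ffun 'I_N -> bool} * 'I_N * bool)%type.
Local Notation n := #|{: state}|.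

Lemma sum_enum_val (F : state -> R) : \sum_(i < n) F (enum_val i) = \sum_z F z.
Proof. by rewrite -(big_enum_val (A := predT)); apply: eq_bigl => z; rewrite inE. Qed.

Definition kernel_mx s : 'M[R]_n :=
  \matrix_(i, j) kernel P pol s (enum_val i) (enum_val j).
Definition reward_col : 'cV[R]_n := \col_i reward R (enum_val i).
Definition state_law_row s Om a1 t : 'rV[R]_n :=
  \row_j state_law P pol s Om a1 t (enum_val j).

Lemma state_law_row_succ s Om a1 t :
  state_law_row s Om a1 t.+1 = state_law_row s Om a1 t *m kernel_mx s.
Proof.
apply/rowP => j; rewrite !mxE state_law_succ -sum_enum_val.
by apply: eq_bigr => i _; rewrite !mxE.
Qed.

Lemma state_law_row_reward s Om a1 t :
  (state_law_row s Om a1 t *m reward_col) 0 0 =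
  \sum_z state_law P pol s Om a1 t z * reward R z.
Proof. by rewrite !mxE -sum_enum_val; apply: eq_bigr => i _; rewrite !mxE. Qed.
End StateLawMatrix.

Theorem lemma2 (R : realType) (N : nat) (P : bool -> bool -> R)
    (pol : policy) (U : R) :
  (0 < N)%N -> stochastic P ->
  (* U = U_i(P): the steady-state average reward, which (standing assumption
     of the context) exists and is independent of Omega(1) *)
  (forall (Om : 'I_N -> R) (s : {perm 'I_N}) (a1 : 'I_N),
      admissible_init Om s a1 ->
      (fun T : nat => expected_reward pol P Om s a1 T / T%:R) @ \oo --> U) ->
  exists C : R,
    forall (Om : 'I_N -> R) (s : {perm 'I_N}) (a1 : 'I_N),
      admissible_init Om s a1 ->
      forall M : nat, (0 < M)%N ->
        `| expected_reward pol P Om s a1 M - M%:R * U | < C.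
Proof.
move=> _ P_stoch U_lim.
have [K KP] := boolp.choice (fun s =>
  mx_orbit_sum_affine (kernel_mx P pol s) (reward_col R N)).
exists (\sum_s K s + 1) => Om s a1 adm M _.
have Om01 : forall k, 0 <= Om k <= 1 by case: adm.
have [_ /(_ (state_law_row P pol s Om a1)) [||c cP]] := KP s.
- by move=> t; apply: state_law_row_succ.
- by move=> t; rewrite state_law_row_reward expected_step_reward_le1.
have reward_affine M' : `|expected_reward pol P Om s a1 M' - M'%:R * c| <= K s.
  rewrite expected_reward_state_law //.
  by under eq_bigr do rewrite -state_law_row_reward.
have <- : c = U.
  exact: cvg_unique (affine_bounded_avg_cvg reward_affine) (U_lim _ _ _ adm).
apply: le_lt_trans (reward_affine M) _.
rewrite (bigD1 s) //= -addrA ltrDl ltr_wpDl //.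
by apply: sumr_ge0 => s' _; case: (KP s').
Qed.
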